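(* There is an absolute constant $C$ such that for every general ordinal setting with $n\ge2$ agents there is a randomized mechanism $\mathcal{M}$ that is a $C\log n$-rank-approximation mechanism, i.e. for every profile $\succ$ and every $i\in[m]$, $\mathbb{E}[\mathrm{rank}_i(\mathcal{M}(\succ);\succ)]\ge\mathrm{maxrank}_i(\succ)/(C\log n)$.
   Context: General ordinal setting: $n$ agents and $m$ outcomes; each agent has a strict total order $\succ_j$ on the outcomes. $\mathrm{rank}_i(o;\succ)$ is the number of agents having $o$ among their top $i$ outcomes, $\mathrm{maxrank}_i(\succ)=\max_o\mathrm{rank}_i(o;\succ)$. A randomized mechanism maps each profile to a probability distribution over outcomes; expectation is over its randomness. *)

From Stdlib Require Import Rdefinitions.
From HB Require Import structures.
From mathcomp Require Import all_boot all_order all_algebra all_fingroup.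
From mathcomp Require Import reals exp Rstruct.

Set Implicit Arguments. Unset Strict Implicit. Unset Printing Implicit Defensive.
Import Order.TTheory GRing.Theory Num.Theory.
Local Open Scope ring_scope.

(* Agent j's strict
   total order is encoded as the permutation [P j] of 'I_m listing the
   outcomes from best to worst: [P j k] is agent j's (k+1)-th favourite
   outcome (k is 0-indexed). *)
Definition profile (n m : nat) := 'I_n -> {perm 'I_m}.

Definition rank (n m : nat) (i : nat) (o : 'I_m) (P : profile n m) : nat :=
  #|[set j : 'I_n | [exists k : 'I_m, (nat_of_ord k < i)%N && (P j k == o)]]|.

Definition maxrank (n m : nat) (i : nat) (P : profile n m) : nat :=
  (\max_(o : 'I_m) rank i o P)%N.

Definition is_distr (m : nat) (p : 'I_m -> R) : Prop :=
  (forall o, 0 <= p o) /\ \sum_(o : 'I_m) p o = 1.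

Definition exp_rank (n m : nat) (i : nat) (p : 'I_m -> R) (P : profile n m) : R :=
  \sum_(o : 'I_m) p o * (rank i o P)%:R.

From Stdlib Require Import Rdefinitions.
From HB Require Import structures.
From mathcomp Require Import all_boot all_order all_algebra all_fingroup.
From mathcomp Require Import reals exp Rstruct.
From mathcomp Require Import ring lra.

(* For each scale t < K = floor(log2 n) + 1, let o_t be an outcome reaching
   rank at least 2^t at the smallest possible level; the mechanism picks o_t
   for a uniformly random t.  Given a level i, take the scale t with
   2^t <= maxrank_i < 2^(t+1): the outcome o_t is reached by at least 2^t
   agents already among their top i choices, so the expected rank_i is at
   least 2^t / K >= maxrank_i / (2K), and K <= 2 log2 n. *)

Set Implicit Arguments. Unset Strict Implicit.
Import Order.TTheory GRing.Theory Num.Theory.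
Local Open Scope ring_scope.

Section Ranks.

Variables (n m : nat) (P : profile n m).

Lemma rank_monotone i j o : (i <= j)%N -> (rank i o P <= rank j o P)%N.
Proof.
move=> le_ij; apply: subset_leq_card; apply/subsetP => x; rewrite !inE.
case/existsP=> k /andP[lt_ki Pxk]; apply/existsP; exists k.
by rewrite Pxk (leq_trans lt_ki le_ij).
Qed.

Lemma rank_le_agents i o : (rank i o P <= n)%N.
Proof. by apply: leq_trans (max_card _) _; rewrite card_ord. Qed.

Lemma maxrank_le_agents i : (maxrank i P <= n)%N.
Proof. by apply/bigmax_leqP => o _; apply: rank_le_agents. Qed.

Lemma maxrank_attained i : (0 < m)%N -> exists o, maxrank i P = rank i o P.
Proof.
move=> m_gt0; have card_gt0 : (0 < #|'I_m|)%N by rewrite card_ord.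
by have [o mr_o] := @bigop.eq_bigmax _ (fun o => rank i o P) card_gt0; exists o.
Qed.

(* A pair x encodes the level x.1 + 1 (levels start at 1) and the outcome x.2. *)
Definition reaches_scale (t : nat) (x : 'I_m * 'I_m) : bool :=
  (2 ^ t <= rank (val x.1).+1 x.2 P)%N.

Definition scale_winner (o0 : 'I_m) (t : nat) : 'I_m :=
  if [pick x | reaches_scale t x] is Some x0
  then (arg_min x0 (reaches_scale t) (fun x => val x.1)).2
  else o0.

Lemma scale_winnerP o0 t i o : (0 < i <= m)%N ->
  (2 ^ t <= rank i o P)%N -> (2 ^ t <= rank i (scale_winner o0 t) P)%N.
Proof.
case/andP=> i_gt0 le_im reach_io.
have lt_im : (i.-1 < m)%N by rewrite prednK.
have reach_x : reaches_scale t (Ordinal lt_im, o) by rewrite /reaches_scale prednK.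
rewrite /scale_winner; case: pickP => [x0 reach_x0|none]; last by rewrite none in reach_x.
case: arg_minnP => // y reach_y min_y.
by apply: leq_trans reach_y (rank_monotone _ _); rewrite -(prednK i_gt0) ltnS (min_y _ reach_x).
Qed.

Lemma maxrank_le_double_scale_sum o0 K i :
  (trunc_log 2 n < K)%N -> (0 < i <= m)%N ->
  (maxrank i P <= 2 * \sum_(t < K) rank i (scale_winner o0 t) P)%N.
Proof.
move=> lt_logK lvl_i; have [->|mr_gt0] := posnP (maxrank i P); first by [].
set t := trunc_log 2 (maxrank i P).
have lo_t : (2 ^ t <= maxrank i P)%N by apply: trunc_logP.
have hi_t : (maxrank i P < 2 ^ t.+1)%N by apply: trunc_log_ltn.
have lt_tK : (t < K)%N by apply: leq_ltn_trans lt_logK; exact/leq_trunc_log/maxrank_le_agents.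
have [o mr_o] : exists o, maxrank i P = rank i o P.
  by apply: maxrank_attained; case/andP: lvl_i; apply: leq_trans.
apply: leq_trans (ltnW hi_t) _; rewrite expnS leq_mul2l /=.
have reach_o : (2 ^ t <= rank i o P)%N by rewrite -mr_o.
apply: leq_trans (scale_winnerP o0 lvl_i reach_o) _.
by rewrite (bigD1 (Ordinal lt_tK)) //= leq_addr.
Qed.

End Ranks.

Definition uniform_mix (m K : nat) (s : nat -> 'I_m) (o : 'I_m) : R :=
  \sum_(t < K) ((o == s t)%:R / K%:R).

Lemma sum_uniform_mix m K (s : nat -> 'I_m) (f : 'I_m -> R) :
  \sum_(o : 'I_m) uniform_mix K s o * f o = K%:R^-1 * \sum_(t < K) f (s t).
Proof.
under eq_bigr do rewrite mulr_suml.
rewrite exchange_big mulr_sumr; apply: eq_bigr => t _ /=.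
rewrite (bigD1 (s t)) //= eqxx big1 ?addr0; first by rewrite mul1r mulrC.
by move=> o /negbTE ->; rewrite !mul0r.
Qed.

Lemma uniform_mix_distr m K (s : nat -> 'I_m) : (0 < K)%N -> is_distr (uniform_mix K s).
Proof.
move=> K_gt0; split=> [o|]; first by apply: sumr_ge0 => t _; rewrite divr_ge0.
rewrite -(eq_bigr _ (fun o _ => mulr1 _)) sum_uniform_mix sumr_const card_ord.
by rewrite -[1 *+ K]/((K%:R : R)) mulVf // pnatr_eq0 -lt0n.
Qed.

Lemma exp_rank_uniform_mix n m K (s : nat -> 'I_m) i (P : profile n m) :
  exp_rank i (uniform_mix K s) P = K%:R^-1 * (\sum_(t < K) rank i (s t) P)%:R.
Proof. by rewrite /exp_rank sum_uniform_mix natr_sum. Qed.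

Lemma maxrank_le_exp_rank_scale_mix n m (P : profile n m) o0 K i :
  (trunc_log 2 n < K)%N -> (0 < i <= m)%N ->
  (maxrank i P)%:R / (2 * K%:R) <= exp_rank i (uniform_mix K (scale_winner P o0)) P.
Proof.
move=> lt_logK lvl_i; have K_gt0 : 0 < (K%:R : R) by rewrite ltr0n (leq_trans _ lt_logK).
rewrite exp_rank_uniform_mix ler_pdivrMr ?mulr_gt0 //.
set S := (\sum_(t < K) _)%N.
apply: le_trans (_ : (2 * S)%:R <= _).
  by rewrite ler_nat maxrank_le_double_scale_sum.
rewrite natrM [leRHS](_ : _ = 2 * S%:R) //.
by field; rewrite gt_eqF.
Qed.

Lemma trunc_log2_succ_ln n : (2 <= n)%N ->
  (trunc_log 2 n).+1%:R * ln (2%:R : R) <= 2 * ln (n%:R : R).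
Proof.
move=> n_ge2; have n_gt0 : 0 < (n%:R : R) by rewrite ltr0n (leq_trans _ n_ge2).
have ln2_le : ln (2%:R : R) <= ln n%:R by rewrite ler_ln ?posrE // ler_nat.
have log_le : (trunc_log 2 n)%:R * ln (2%:R : R) <= ln n%:R.
  rewrite mulr_natl -lnXn // ler_ln ?posrE ?exprn_gt0 // -natrX ler_nat.
  exact: trunc_logP (leq_trans _ n_ge2).
rewrite -addn1 natrD mulrDl mul1r; lra.
Qed.

Theorem theorem16 :
  exists C : R, 0 < C /\
    forall (n m : nat), (2 <= n)%N -> (0 < m)%N ->
      exists M : profile n m -> 'I_m -> R,
        (forall P : profile n m, is_distr (M P)) /\
        (forall (P : profile n m) (i : nat), (1 <= i <= m)%N ->
           (maxrank i P)%:R / (C * ln (n%:R : R)) <= exp_rank i (M P) P).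
Proof.
have ln2_gt0 : 0 < ln (2%:R : R) by apply: ln_gt0; rewrite ltr1n.
have C_gt0 : 0 < 4 / ln (2%:R : R) by rewrite divr_gt0.
exists (4 / ln (2%:R : R)); split=> // n m n_ge2 m_gt0.
pose K := (trunc_log 2 n).+1.
exists (fun P => uniform_mix K (scale_winner P (Ordinal m_gt0))).
split=> [P|P i lvl_i]; first exact: uniform_mix_distr.
apply: le_trans (maxrank_le_exp_rank_scale_mix _ _ _ lvl_i); last exact: ltnSn.
have lnn_gt0 : 0 < ln (n%:R : R) by apply: ln_gt0; rewrite ltr1n.
have K_gt0 : 0 < (K%:R : R) by rewrite ltr0n.
have le_2K : 2 * K%:R <= 4 / ln (2%:R : R) * ln (n%:R : R).
  rewrite mulrAC ler_pdivlMr //; have := trunc_log2_succ_ln n_ge2; rewrite -/K; lra.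
by rewrite ler_wpM2l // lef_pV2 // posrE ?(mulr_gt0 C_gt0 lnn_gt0) ?(mulr_gt0 _ K_gt0).
Qed.
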